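(* Let $G$ be a free group on $k\ge 2$ generators and let $m\ge 1$. Let $\Phi$ be a linear action of $G$ on $\mathbb R^m$ (i.e. each $f_g=\Phi(g,\cdot)$ is an invertible linear map of $\mathbb R^m$), where $\mathbb R^m$ carries the Euclidean metric. Then $\Phi$ does not have the shadowing property.
   Context: An action of a group $G$ on a metric space $(\Omega,\mathrm{dist})$ is a map $\Phi:G\times\Omega\to\Omega$ such that each $f_g=\Phi(g,\cdot)$ is a homeomorphism, $\Phi(e,x)=x$, and $\Phi(g_1g_2,x)=\Phi(g_1,\Phi(g_2,x))$. Fix a finite symmetric generating set $S$ of $G$ (e.g. the free generators and their inverses; the property below does not depend on this choice). For $d>0$, a family $\{y_g\}_{g\in G}\subset\Omega$ is a $d$-pseudotrajectory if $\mathrm{dist}(y_{sg},f_s(y_g))<d$ for all $s\in S$, $g\in G$. The action has the shadowing property if for every $\varepsilon>0$ there is $d>0$ such that for every $d$-pseudotrajectory $\{y_g\}_{g\in G}$ there is $x_e\in\Omega$ with $\mathrm{dist}(y_g,f_g(x_e))<\varepsilon$ for all $g\in G$. *)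

From Stdlib Require Import Reals.
From mathcomp Require Import all_boot.

Set Implicit Arguments.
Unset Strict Implicit.
Unset Printing Implicit Defensive.

(* A letter is a generator index i : 'I_k together with a sign:
   (i, true) = x_i, (i, false) = x_i^{-1}. *)
Definition letter (k : nat) : Type := ('I_k * bool)%type.

Definition linv (k : nat) (a : letter k) : letter k := (a.1, ~~ a.2).

Fixpoint reduced (k : nat) (w : seq (letter k)) : bool :=
  match w with
  | a :: ((b :: _) as w') => (b != linv a) && reduced w'
  | _ => true
  end.

Definition push (k : nat) (a : letter k) (w : seq (letter k)) : seq (letter k) :=
  match w with
  | [::] => [:: a]
  | b :: w' => if b == linv a then w' else a :: w
  end.

Lemma reduced_tail (k : nat) (b : letter k) (w : seq (letter k)) :
  reduced (b :: w) -> reduced w.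
Proof. by case: w => [|c w] //= /andP[]. Qed.

Lemma push_reduced (k : nat) (a : letter k) (w : seq (letter k)) :
  reduced w -> reduced (push a w).
Proof.
case: w => [|b w] //= Hw.
case: eqP => [_|/eqP Hb]; first exact: (reduced_tail Hw).
by rewrite /= Hb.
Qed.

Lemma foldr_push_reduced (k : nat) (u v : seq (letter k)) :
  reduced v -> reduced (foldr (@push k) v u).
Proof. by elim: u => [|a u IH] //= Hv; apply: push_reduced; apply: IH. Qed.

Record FreeGroup (k : nat) : Type :=
  FG { fg_word : seq (letter k); fg_red : reduced fg_word }.

Definition fg_one (k : nat) : FreeGroup k := @FG k [::] isT.

Definition fg_letter (k : nat) (a : letter k) : FreeGroup k := @FG k [:: a] isT.

Definition fg_mul (k : nat) (u v : FreeGroup k) : FreeGroup k :=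
  @FG k (foldr (@push k) (fg_word v) (fg_word u))
        (foldr_push_reduced (fg_word u) (fg_red v)).

Definition Rm (m : nat) : Type := 'I_m -> R.

Definition vadd (m : nat) (x y : Rm m) : Rm m := fun i => Rplus (x i) (y i).
Definition vscale (m : nat) (c : R) (x : Rm m) : Rm m := fun i => Rmult c (x i).

Definition euclid_dist (m : nat) (x y : Rm m) : R :=
  sqrt (\big[Rplus/R0]_(i < m) Rmult (Rminus (x i) (y i)) (Rminus (x i) (y i))).

Definition is_action (k m : nat) (Phi : FreeGroup k -> Rm m -> Rm m) : Prop :=
  (forall x, Phi (fg_one k) x = x) /\
  (forall g1 g2 x, Phi (fg_mul g1 g2) x = Phi g1 (Phi g2 x)).

Definition is_linear_map (m : nat) (f : Rm m -> Rm m) : Prop :=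
  (forall x y, f (vadd x y) = vadd (f x) (f y)) /\
  (forall c x, f (vscale c x) = vscale c (f x)).

Definition linear_action (k m : nat) (Phi : FreeGroup k -> Rm m -> Rm m) : Prop :=
  is_action Phi /\ (forall g, is_linear_map (Phi g)) /\
  (forall g, bijective (Phi g)).

Definition pseudotrajectory (k m : nat) (Phi : FreeGroup k -> Rm m -> Rm m)
    (d : R) (y : FreeGroup k -> Rm m) : Prop :=
  forall (s : letter k) (g : FreeGroup k),
    Rlt (euclid_dist (y (fg_mul (fg_letter s) g)) (Phi (fg_letter s) (y g))) d.

Definition shadowing_property (k m : nat) (Phi : FreeGroup k -> Rm m -> Rm m) : Prop :=
  forall eps : R, Rlt R0 eps ->
  exists d : R, Rlt R0 d /\
  forall y : FreeGroup k -> Rm m, pseudotrajectory Phi d y ->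
  exists x : Rm m, forall g : FreeGroup k, Rlt (euclid_dist (y g) (Phi g x)) eps.

(* Write |.| for the sup of the coordinates.  By scaling (linearity), shadowing
   implies that every family y with BOUNDED error |y_{sg} - f_s y_g| <= B is
   traced at BOUNDED distance by a true trajectory g |-> f_g x
   ([shadow_bounded_error]).  Fix two distinct positive letters a, b.  Every
   reduced word can be extended on the right by a or by b, so either
   (A) every orbit {f_g u} is bounded, or
   (B) for some u and some letter s in {a, b}, with t the other one, the
       values f_w u over reduced words w such that w s is reduced are unbounded.
   In case (A) the operators f_g are uniformly bounded, hence so are their
   inverses; the family y_g = |g| f_g v (|g| the word length) has bounded error,
   and a trajectory tracing it would give |n v - x| bounded for all n.
   In case (B) the families y^j_g = f_{g h_j^-1} u if g ends with h_j = s t^{j+1},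
   and 0 otherwise (j = 0..m), have bounded errors; their tracing points X_j are
   m+1 vectors of R^m, hence linearly dependent, sum c_j X_j = 0.  Since the
   suffixes h_j are mutually exclusive, evaluating sum c_j (y^j - f X_j) at
   g = w h_j0 bounds c_j0 f_w u, contradicting unboundedness. *)

From Stdlib Require Import Reals Lra Classical IndefiniteDescription
  FunctionalExtensionality.
From mathcomp Require Import all_boot all_algebra.
From mathcomp Require Import Rstruct zify.

Set Implicit Arguments.
Unset Strict Implicit.
Unset Printing Implicit Defensive.

Open Scope R_scope.

Notation rsum r F := (\big[Rplus/R0]_(j <- r) F j).

Lemma rsum_le (I : Type) (r : seq I) (F G : I -> R) :
  (forall j, F j <= G j) -> rsum r F <= rsum r G.
Proof.
move=> FG; elim: r => [|x r IH]; rewrite ?big_nil ?big_cons; first lra.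
exact: Rplus_le_compat.
Qed.

Lemma rsum_abs (I : Type) (r : seq I) (F : I -> R) :
  Rabs (rsum r F) <= rsum r (fun j => Rabs (F j)).
Proof.
elim: r => [|x r IH]; rewrite ?big_nil ?big_cons; first by rewrite Rabs_R0; lra.
by apply: Rle_trans (Rabs_triang _ _) _; apply: Rplus_le_compat_l.
Qed.

Lemma rsum_scal (I : Type) (r : seq I) (c : R) (F : I -> R) :
  rsum r (fun j => c * F j) = c * rsum r F.
Proof. by elim: r => [|x r IH]; rewrite ?big_nil ?big_cons ?IH; ring. Qed.

Lemma rsum_sub (I : Type) (r : seq I) (F G : I -> R) :
  rsum r (fun j => F j - G j) = rsum r F - rsum r G.
Proof. by elim: r => [|x r IH]; rewrite ?big_nil ?big_cons ?IH; ring. Qed.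

Lemma rsum_ge0 (I : Type) (r : seq I) (F : I -> R) :
  (forall j, 0 <= F j) -> 0 <= rsum r F.
Proof.
move=> F0; elim: r => [|x r IH]; rewrite ?big_nil ?big_cons; first lra.
by have := F0 x; lra.
Qed.

Lemma term_le_sum (n : nat) (F : 'I_n -> R) (i : 'I_n) :
  (forall j, 0 <= F j) -> F i <= \big[Rplus/R0]_(j < n) F j.
Proof.
move=> F0; rewrite (bigD1 i) //= -{1}[F i]Rplus_0_r; apply: Rplus_le_compat_l.
by rewrite big_mkcond /=; apply: rsum_ge0 => j; case: ifP => _ //; lra.
Qed.

Lemma rsum_const_le (n : nat) (F : 'I_n -> R) (B : R) :
  (forall j, F j <= B) -> \big[Rplus/R0]_(j < n) F j <= INR n * B.
Proof.
elim: n F => [|n IH] F FB; first by rewrite big_ord0 /=; lra.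
rewrite big_ord_recr S_INR Rmult_plus_distr_r Rmult_1_l.
by apply: Rplus_le_compat; [apply: IH | apply: FB].
Qed.

Lemma coord_le_dist (m : nat) (u v : Rm m) (i : 'I_m) :
  Rabs (u i - v i) <= euclid_dist u v.
Proof.
rewrite /euclid_dist -sqrt_Rsqr_abs; apply: sqrt_le_1_alt.
by apply: (term_le_sum (F := fun j => (u j - v j) * (u j - v j))) => j;
  apply: Rle_0_sqr.
Qed.

Lemma dist_lt_coord (m : nat) (u v : Rm m) (e : R) :
  0 < e -> (forall i, Rabs (u i - v i) <= e) ->
  euclid_dist u v < (INR m + 1) * e.
Proof.
move=> e0 ue; have m0 := pos_INR m.
have sum_le : \big[Rplus/R0]_(i < m) ((u i - v i) * (u i - v i)) <= INR m * (e * e).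
  apply: rsum_const_le => i; apply: (Rsqr_le_abs_1 (u i - v i) e).
  by rewrite (Rabs_pos_eq e) ?ue //; lra.
rewrite -[X in _ < X]sqrt_square; last nra.
apply: sqrt_lt_1_alt; split; first by apply: rsum_ge0 => i; apply: Rle_0_sqr.
by apply: Rle_lt_trans sum_le _; nra.
Qed.

Definition vzero {m : nat} : Rm m := fun _ => R0.

Definition ebasis {m : nat} (j : 'I_m) : Rm m := fun i => if j == i then 1 else 0.

Lemma lin_zero (m : nat) (f : Rm m -> Rm m) : is_linear_map f -> f vzero = vzero.
Proof.
case=> _ fZ; have -> : (vzero : Rm m) = vscale R0 vzero.
  by apply: functional_extensionality => i; rewrite /vscale Rmult_0_l.
by rewrite fZ; apply: functional_extensionality => i; rewrite /vscale !Rmult_0_l.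
Qed.

Lemma lin_comb (m : nat) (f : Rm m -> Rm m) (I : Type) (r : seq I)
    (c : I -> R) (v : I -> Rm m) :
  is_linear_map f ->
  f (fun i => rsum r (fun j => c j * v j i)) = fun i => rsum r (fun j => c j * f (v j) i).
Proof.
move=> flin; elim: r => [|x r IH].
  have -> : (fun i : 'I_m => rsum [::] (fun j => c j * v j i)) = vzero.
    by apply: functional_extensionality => i; rewrite big_nil.
  by rewrite lin_zero //; apply: functional_extensionality => i; rewrite big_nil.
have -> : (fun i : 'I_m => rsum (x :: r) (fun j => c j * v j i)) =
    vadd (vscale (c x) (v x)) (fun i => rsum r (fun j => c j * v j i)).
  by apply: functional_extensionality => i; rewrite big_cons.
case: flin => fD fZ; rewrite fD fZ IH.
by apply: functional_extensionality => i; rewrite big_cons.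
Qed.

Lemma basis_decomp (m : nat) (q : Rm m) :
  q = fun i => \big[Rplus/R0]_(j < m) (q j * ebasis j i).
Proof.
apply: functional_extensionality => i; rewrite (bigD1 i) //= big1.
  by rewrite /ebasis eqxx; ring.
by move=> j /negbTE ji; rewrite /ebasis ji; ring.
Qed.

Lemma lin_coord_bound (m : nat) (f : Rm m -> Rm m) (Kf : 'I_m -> R) (q : Rm m) (Q : R) :
  is_linear_map f -> (forall j i, Rabs (f (ebasis j) i) <= Kf j) ->
  (forall i, Rabs (q i) <= Q) ->
  forall i, Rabs (f q i) <= Q * \big[Rplus/R0]_(j < m) Kf j.
Proof.
move=> flin fK qQ i; rewrite [q]basis_decomp lin_comb //.
apply: Rle_trans (rsum_abs _ _) _; rewrite -rsum_scal; apply: rsum_le => j.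
by rewrite Rabs_mult; apply: Rmult_le_compat; rewrite ?qQ ?fK //; apply: Rabs_pos.
Qed.

Lemma lin_dependent (m : nat) (X : 'I_m.+1 -> Rm m) :
  exists c : 'I_m.+1 -> R, (exists j, c j <> 0) /\
    forall i, \big[Rplus/R0]_(j < m.+1) (c j * X j i) = 0.
Proof.
pose A : 'M[R]_(m.+1, m) := (\matrix_(j, i) X j i)%R.
have : (kermx A != 0)%R.
  rewrite kermx_eq0 /row_free; apply/negP => /eqP rkA.
  by have := rank_leq_col A; rewrite rkA ltnn.
move=> /eqP kerA0.
have [j [l kjl]] : exists j l, kermx A j l <> 0%R.
  apply: NNPP => all0; apply: kerA0; apply/matrixP => j l; rewrite [RHS]mxE.
  by apply: NNPP => kjl; apply: all0; exists j, l.
exists (fun l => kermx A j l); split; first by exists l.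
move=> i; have := congr1 (fun M : 'M[R]_(m.+1, m) => M j i) (mulmx_ker A).
rewrite !mxE => ker0; rewrite -[RHS]/(0%R : R) -ker0.
by apply: eq_bigr => p _; rewrite [A p i]mxE.
Qed.

Lemma linvK (k : nat) (s : letter k) : linv (linv s) = s.
Proof. by case: s => i b; rewrite /linv /= negbK. Qed.

Lemma neq_linv (k : nat) (t : letter k) : t != linv t.
Proof. by case: t => i b; rewrite /linv /=; apply/eqP => [[]]; case: b. Qed.

Section WordAction.

Variables (k m : nat) (Phi : FreeGroup k -> Rm m -> Rm m).
Hypothesis act : is_action Phi.

Definition act_word (w : seq (letter k)) (x : Rm m) : Rm m :=
  foldr (fun a v => Phi (fg_letter a) v) x w.

Lemma act_word_cat w1 w2 x : act_word (w1 ++ w2) x = act_word w1 (act_word w2 x).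
Proof. by rewrite /act_word foldr_cat. Qed.

Lemma fg_eq (u v : FreeGroup k) : fg_word u = fg_word v -> u = v.
Proof.
by case: u v => [w r] [w' r'] /= ww'; subst w'; rewrite (bool_irrelevance r r').
Qed.

Lemma push_reduced_cons (a : letter k) w : reduced (a :: w) -> push a w = a :: w.
Proof. by case: w => [|b w] //= /andP [ba _]; rewrite (negbTE ba). Qed.

Lemma act_fg_word g x : Phi g x = act_word (fg_word g) x.
Proof.
case: act => act1 actM; case: g => w r /=; elim: w r x => [|a w IH] r x /=.
  by have -> : FG r = fg_one k by apply: fg_eq.
have -> : FG r = fg_mul (fg_letter a) (FG (reduced_tail r)).
  by apply: fg_eq; rewrite /= push_reduced_cons.
by rewrite actM IH.
Qed.

Lemma act_word_elem w : exists g, forall x, act_word w x = Phi g x.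
Proof.
case: act => act1 actM; elim: w => [|a w [g IH]]; first by exists (fg_one k).
by exists (fg_mul (fg_letter a) g) => x /=; rewrite IH actM.
Qed.

Lemma letter_inv s x : Phi (fg_letter s) (Phi (fg_letter (linv s)) x) = x.
Proof.
case: act => act1 actM; rewrite -actM.
have -> : fg_mul (fg_letter s) (fg_letter (linv s)) = fg_one k.
  by apply: fg_eq; rewrite /= eqxx.
exact: act1.
Qed.

Lemma act_inverse g : exists h, forall x, Phi h (Phi g x) = x.
Proof.
have [h hw] := act_word_elem (rev (map (@linv k) (fg_word g))).
exists h => x; rewrite -hw act_fg_word; elim: (fg_word g) x => [|a w IH] x //=.
rewrite rev_cons -cats1 act_word_cat /=.
by have := letter_inv (linv a) (act_word w x); rewrite linvK => ->.
Qed.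

End WordAction.

Lemma reduced_rcons (k : nat) (s : letter k) w :
  reduced w -> last s w != linv s -> reduced (w ++ [:: s]).
Proof.
elim: w => [|x w IH] //= wr ls; case: w IH wr ls => [|y w] IH /= wr ls.
  by rewrite andbT; apply/negP => /eqP xs; move: ls; rewrite xs linvK eqxx.
by move/andP: wr => [-> wr]; exact: IH.
Qed.

Lemma reduced_extension (k : nat) (a b : letter k) w :
  a != b -> reduced w -> reduced (w ++ [:: a]) || reduced (w ++ [:: b]).
Proof.
move=> ab wr; case E: (last a w == linv a); last by rewrite reduced_rcons ?E.
apply/orP; right; apply: reduced_rcons => //.
case: w wr E => [|c w] wr; first by rewrite /= (negbTE (neq_linv a)).
move=> /= /eqP ->; apply/eqP => /(congr1 (@linv k)); rewrite !linvK => ab'.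
by move: ab; rewrite ab' eqxx.
Qed.

Lemma reduced_cat (k : nat) (s : letter k) w l :
  reduced (w ++ [:: s]) -> reduced (s :: l) -> reduced (w ++ s :: l).
Proof.
elim: w => [|x w IH] //= ws sl; case: w IH ws => [|y w] IH /= ws.
  by move: ws => /andP [-> _].
by move/andP: ws => [-> ws]; exact: IH.
Qed.

Lemma reduced_cons_nseq (k : nat) (s t : letter k) n :
  t != linv s -> reduced (s :: nseq n t).
Proof.
move=> ts; elim: n => [|n IH] //; case: n IH => [|n] /= IH; first by rewrite ts.
rewrite ts /=; move: IH => /= /andP [_ ->]; rewrite andbT.
by apply/eqP => tt; have := neq_linv t; rewrite -{1}tt eqxx.
Qed.

Lemma reduced_nseq (k : nat) (t : letter k) n : reduced (nseq n t).
Proof. by case: n => [|n] //; apply: reduced_cons_nseq (neq_linv t). Qed.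

Lemma length_push (k : nat) (s : letter k) w :
  Rabs (INR (size (push s w)) - INR (size w)) <= 1.
Proof.
have [-> | ->] : (size (push s w) = (size w).+1 \/ size (push s w) = (size w).-1)%N.
- by case: w => [|b w] /=; [left | case: ifP => _ /=; [right | left]].
- by rewrite S_INR Rplus_minus_l Rabs_R1; lra.
- case: (size w) => [|n]; first by rewrite Rminus_diag Rabs_R0; lra.
  rewrite S_INR /=; have -> : INR n - (INR n + 1) = - 1 by ring.
  by rewrite Rabs_Ropp Rabs_R1; lra.
Qed.

(** * Shadowing of pseudotrajectories with bounded error *)

Section Shadowing.

Variables (k m : nat) (Phi : FreeGroup k -> Rm m -> Rm m).
Hypothesis lin : linear_action Phi.
Hypothesis shadow : shadowing_property Phi.

Definition bounded_error (y : FreeGroup k -> Rm m) (B : R) : Prop :=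
  forall s g i, Rabs (y (fg_mul (fg_letter s) g) i - Phi (fg_letter s) (y g) i) <= B.

(* Scaling y down to a d-pseudotrajectory and the shadowing point back up
   shows that y stays at bounded distance from a true trajectory. *)
Lemma shadow_bounded_error y B :
  bounded_error y B -> exists x K, forall g i, Rabs (y g i - Phi g x i) <= K.
Proof.
case: lin => _ [flin _] yB.
have [d [d0 shadow_d]] := @shadow 1 Rlt_0_1.
have m0 := pos_INR m; have B0 := Rabs_pos B.
pose t := d / ((INR m + 1) * (Rabs B + 1)).
have t0 : 0 < t by apply: Rdiv_lt_0_compat => //; apply: Rmult_lt_0_compat; lra.
have tB : t * (Rabs B + 1) = d / (INR m + 1) by rewrite /t; field; lra.
have [|x x_shadows] := shadow_d (fun g => vscale t (y g)).
  move=> s g; case: (flin (fg_letter s)) => _ ->.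
  have -> : d = (INR m + 1) * (d / (INR m + 1)) by field; lra.
  apply: dist_lt_coord; first by apply: Rdiv_lt_0_compat; lra.
  move=> i; rewrite /vscale -Rmult_minus_distr_l Rabs_mult (Rabs_pos_eq t); last lra.
  by rewrite -tB; apply: Rmult_le_compat_l; [lra | have := yB s g i; have := Rle_abs B; lra].
exists (vscale (/ t) x), (/ t) => g i.
case: (flin g) => _ ->; rewrite /vscale.
have -> : y g i - / t * Phi g x i = / t * (t * y g i - Phi g x i) by field; lra.
have tinv0 := Rinv_0_lt_compat _ t0.
rewrite Rabs_mult Rabs_pos_eq; last lra.
have := coord_le_dist (vscale t (y g)) (Phi g x) i; have := x_shadows g; rewrite /vscale.
by move=> dist1 coord_dist; rewrite -{2}[/ t]Rmult_1_r; apply: Rmult_le_compat_l; lra.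
Qed.

Lemma shadow_bounded_family (n : nat) (y : 'I_n -> FreeGroup k -> Rm m) B :
  (forall j, bounded_error (y j) B) ->
  exists (X : 'I_n -> Rm m) K, forall j g i, Rabs (y j g i - Phi g (X j) i) <= K.
Proof.
move=> yB.
have traced : forall j, exists xK : Rm m * R,
    forall g i, Rabs (y j g i - Phi g xK.1 i) <= xK.2.
  by move=> j; have [x [K xK]] := shadow_bounded_error (yB j); exists (x, K).
have [XK XK_ok] := functional_choice _ traced.
exists (fun j => (XK j).1), (\big[Rplus/R0]_(j < n) Rabs (XK j).2) => j g i.
apply: Rle_trans (XK_ok j g i) (Rle_trans _ _ _ (Rle_abs _) _).
by apply: (term_le_sum (F := fun j => Rabs (XK j).2)) => l; apply: Rabs_pos.
Qed.

End Shadowing.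

(** * Case (A): all orbits bounded *)

Definition bounded_orbit (k m : nat) (Phi : FreeGroup k -> Rm m -> Rm m) (u : Rm m) :=
  exists K, forall g i, Rabs (Phi g u i) <= K.

Lemma bounded_orbits_no_shadowing (k m : nat) (Phi : FreeGroup k -> Rm m -> Rm m) :
  (0 < k)%N -> (0 < m)%N -> linear_action Phi ->
  (forall u, bounded_orbit Phi u) -> ~ shadowing_property Phi.
Proof.
move=> k0 m0 lin orbits shadow; have [act [flin _]] := lin.
have [Kf Kf_ok] := functional_choice
  (fun j (K : R) => forall g i, Rabs (Phi g (ebasis j) i) <= K) (fun j => orbits _).
pose i0 : 'I_m := Ordinal m0; pose v : Rm m := ebasis i0.
(* y_g = |g| f_g v has one-step errors bounded by the orbit bound of v *)
pose y g : Rm m := vscale (INR (size (fg_word g))) (Phi g v).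
have yB : bounded_error Phi y (1 * Kf i0).
  move=> s g i; case: (flin (fg_letter s)) => _ fZ; rewrite /y fZ /vscale -(proj2 act).
  set sg := fg_mul _ _; rewrite -Rmult_minus_distr_r Rabs_mult.
  by apply: Rmult_le_compat; [exact: Rabs_pos | exact: Rabs_pos | exact: length_push | exact: Kf_ok].
have [x [K xK]] := shadow_bounded_error lin shadow yB.
pose a : letter k := (Ordinal k0, true).
(* along g = a^n, the vector n v - x has coordinates <= K * sum Kf *)
have n_le : forall n, INR n <= K * \big[Rplus/R0]_(j < m) Kf j + Rabs (x i0).
  move=> n; pose g := @FG k (nseq n a) (reduced_nseq a n).
  pose z : Rm m := fun i => INR n * v i - x i.
  have fgz : Phi g z = fun i => y g i - Phi g x i.
    have -> : z = vadd (vscale (INR n) v) (vscale (-1) x).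
      by apply: functional_extensionality => i; rewrite /z /vadd /vscale; ring.
    case: (flin g) => fD fZ; rewrite fD !fZ.
    by apply: functional_extensionality => i; rewrite /vadd /y /= size_nseq /vscale; ring.
  have [h hg] := act_inverse act g.
  have zK : forall i, Rabs (Phi g z i) <= K by move=> i; rewrite fgz; apply: xK.
  have := lin_coord_bound (flin h) (Kf_ok^~ h) zK i0.
  rewrite hg /z /v /ebasis eqxx Rmult_1_r.
  have := Rabs_triang (INR n - x i0) (x i0).
  have -> : INR n - x i0 + x i0 = INR n by ring.
  by rewrite Rabs_pos_eq; [lra | apply: pos_INR].
have [n nK] := INR_unbounded (K * \big[Rplus/R0]_(j < m) Kf j + Rabs (x i0)).
by have := n_le n; lra.
Qed.

(** * Case (B): an unbounded direction *)

Lemma suffix_consE (T : eqType) (h : seq T) x w :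
  suffix h (x :: w) = (h == x :: w) || suffix h w.
Proof.
apply/idP/orP.
  move/suffixP => [[|y r] /= hw]; first by left; rewrite hw.
  by right; case: hw => _ ->; exact: suffix_suffix.
case=> [/eqP -> | hw]; first exact: suffix_refl.
exact: suffix_trans hw (suffix_cons _ _).
Qed.

Lemma suffix_shorter (T : eqType) (a b W : seq T) :
  suffix a W -> suffix b W -> (size a <= size b)%N -> suffix a b.
Proof.
move=> aW bW ab; have bW' := size_suffix bW.
move: aW bW; rewrite !suffixE => /eqP ea /eqP eb.
by apply/eqP; rewrite -{2}ea -eb drop_drop size_drop; congr drop; lia.
Qed.

Lemma suffix_nseq_excl (k : nat) (s t : letter k) (i j : nat) :
  s != t -> (i < j)%N -> ~~ suffix (s :: nseq i.+1 t) (s :: nseq j.+1 t).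
Proof.
move=> st ij; rewrite suffix_consE; apply/norP; split.
  apply/eqP => /(congr1 size); rewrite /= !size_nseq => -[ji].
  by move: ij; rewrite ji ltnn.
apply/negP => /suffixP [r e].
have : s \in nseq j.+1 t by rewrite e mem_cat mem_head orbT.
by rewrite mem_nseq /= (negbTE st).
Qed.

Section UnboundedDirection.

Variables (k m : nat) (Phi : FreeGroup k -> Rm m -> Rm m).
Hypothesis lin : linear_action Phi.

(* The orbit of u restricted to the words ending with h:
   w = w' h  |->  f_{w'} u, and 0 on the other words. *)
Definition tail_orbit (u : Rm m) (h w : seq (letter k)) : Rm m :=
  if suffix h w then act_word Phi (take (size w - size h) w) u else vzero.

(* A tail orbit of u along a word starting with s has one-step errors bounded
   by |u| + |f_{s^-1} u|: errors only occur where the suffix h appears or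
   disappears. *)
Lemma tail_orbit_error (u : Rm m) (s : letter k) (l : seq (letter k)) sg w i :
  Rabs (tail_orbit u (s :: l) (push sg w) i - Phi (fg_letter sg) (tail_orbit u (s :: l) w) i)
    <= Rabs (u i) + Rabs (Phi (fg_letter (linv s)) u i).
Proof.
have [act [flin _]] := lin; set h := s :: l; set B := _ + _.
have B0 : 0 <= B.
  by rewrite /B; have := Rabs_pos (u i); have := Rabs_pos (Phi (fg_letter (linv s)) u i); lra.
have f0 : Phi (fg_letter sg) vzero = vzero by apply: lin_zero.
have grow : forall w, Rabs (tail_orbit u h (sg :: w) i - Phi (fg_letter sg) (tail_orbit u h w) i) <= B.
  move=> w0; rewrite /tail_orbit suffix_consE.
  case hw: (suffix h w0); rewrite ?orbT ?orbF.
    by rewrite subSn ?(size_suffix hw) //= Rminus_diag Rabs_R0.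
  case: eqP => [hsw | _]; last by rewrite f0 /vzero Rminus_diag Rabs_R0.
  rewrite -hsw subnn /= f0 /vzero Rminus_0_r /B.
  by have := Rabs_pos (Phi (fg_letter (linv s)) u i); lra.
have shrink : forall w, Rabs (tail_orbit u h w i -
    Phi (fg_letter sg) (tail_orbit u h (linv sg :: w)) i) <= B.
  move=> w0; rewrite /tail_orbit suffix_consE.
  case hw: (suffix h w0); rewrite ?orbT ?orbF.
    by rewrite subSn ?(size_suffix hw) //= letter_inv // Rminus_diag Rabs_R0.
  case: eqP => [hsw | _]; last by rewrite f0 /vzero Rminus_diag Rabs_R0.
  rewrite hsw subnn /=; have -> : sg = linv s by case: hsw => -> _; rewrite linvK.
  by rewrite /vzero Rminus_0_l Rabs_Ropp /B; have := Rabs_pos (u i); lra.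
case: w => [|b w'] /=; first exact: grow.
by case: ifP => [/eqP -> | _]; [exact: shrink | exact: grow].
Qed.

Lemma tail_orbit_excl (u : Rm m) (s t : letter k) (w : seq (letter k)) (n : nat) (j j0 : 'I_n) :
  s != t ->
  tail_orbit u (s :: nseq j.+1 t) (w ++ s :: nseq j0.+1 t) =
  if j == j0 then act_word Phi w u else vzero.
Proof.
move=> st; rewrite /tail_orbit; case: eqP => [-> | jj0].
  by rewrite suffix_suffix size_cat addnK take_size_cat.
suff -> : suffix (s :: nseq j.+1 t) (w ++ s :: nseq j0.+1 t) = false by [].
apply/negP => hj; have hj0 := suffix_suffix w (s :: nseq j0.+1 t).
have : nat_of_ord j != j0 by apply/eqP => e; apply: jj0; apply: val_inj.
case: ltngtP => // lt _; have := suffix_nseq_excl st lt.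
  by rewrite (suffix_shorter hj hj0) //= !size_nseq ltnW.
by rewrite (suffix_shorter hj0 hj) //= !size_nseq ltnW.
Qed.

Definition tail_bounded (s : letter k) (u : Rm m) :=
  exists K, forall w, reduced (w ++ [:: s]) -> forall i, Rabs (act_word Phi w u i) <= K.

Lemma unbounded_tail_no_shadowing (s t : letter k) (u : Rm m) :
  s != t -> t != linv s -> ~ tail_bounded s u -> ~ shadowing_property Phi.
Proof.
move=> st ts unbnd shadow; have [_ [flin _]] := lin.
pose hj (j : 'I_m.+1) := s :: nseq j.+1 t.
pose y j (g : FreeGroup k) := tail_orbit u (hj j) (fg_word g).
have [|X [K XK]] := shadow_bounded_family lin shadow
    (B := \big[Rplus/R0]_(i < m) (Rabs (u i) + Rabs (Phi (fg_letter (linv s)) u i))) (y := y).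
  move=> j sg g i; apply: Rle_trans (tail_orbit_error _ _ _ _ _ _) _.
  apply: (term_le_sum (F := fun i => Rabs (u i) + Rabs (Phi (fg_letter (linv s)) u i))) => l.
  by have := Rabs_pos (u l); have := Rabs_pos (Phi (fg_letter (linv s)) u l); lra.
have [c [[j0 cj0] cX]] := lin_dependent X.
(* the trajectories of the X_j combine to 0, so sum c_j y^j stays bounded *)
pose M := \big[Rplus/R0]_(j < m.+1) (Rabs (c j) * K).
have comb_le : forall g i,
    Rabs (\big[Rplus/R0]_(j < m.+1) (c j * y j g i)) <= M.
  move=> g i; have := congr1 (fun f => f i) (lin_comb (index_enum 'I_m.+1) c X (flin g)).
  have -> : (fun i => \big[Rplus/R0]_(j <- index_enum 'I_m.+1) (c j * X j i)) = vzero.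
    by apply: functional_extensionality => l; apply: cX.
  rewrite lin_zero // /vzero /= => comb0.
  have -> : \big[Rplus/R0]_(j < m.+1) (c j * y j g i) =
      \big[Rplus/R0]_(j < m.+1) (c j * y j g i - c j * Phi g (X j) i).
    by rewrite rsum_sub -comb0 Rminus_0_r.
  apply: Rle_trans (rsum_abs _ _) (rsum_le _ _) => j.
  rewrite -Rmult_minus_distr_l Rabs_mult.
  by apply: Rmult_le_compat_l; [apply: Rabs_pos | exact: XK].
have cj0_pos : 0 < Rabs (c j0) by apply: Rabs_pos_lt.
have [w [ws [i Mi]]] : exists w, reduced (w ++ [:: s]) /\
    exists i, M / Rabs (c j0) < Rabs (act_word Phi w u i).
  apply: NNPP => bnd; apply: unbnd; exists (M / Rabs (c j0)) => w ws i.
  by apply: Rnot_lt_le => Mi; apply: bnd; exists w; split => //; exists i.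
(* at g = w h_j0 the combination equals c_j0 f_w u *)
pose g := @FG k (w ++ hj j0) (reduced_cat ws (reduced_cons_nseq _ ts)).
have := comb_le g i; rewrite (bigD1 j0) //= big1; last first.
  by move=> j /negbTE jj0; rewrite /y /= tail_orbit_excl // jj0 /vzero Rmult_0_r.
rewrite /y /= tail_orbit_excl // eqxx Rplus_0_r Rabs_mult => le_M.
have : M / Rabs (c j0) * Rabs (c j0) < Rabs (act_word Phi w u i) * Rabs (c j0).
  exact: Rmult_lt_compat_r.
have -> : M / Rabs (c j0) * Rabs (c j0) = M by field; lra.
lra.
Qed.

End UnboundedDirection.

Theorem theorem3 (k m : nat) (hk : (2 <= k)%N) (hm : (1 <= m)%N)
    (Phi : FreeGroup k -> Rm m -> Rm m) :
  linear_action Phi -> ~ shadowing_property Phi.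
Proof.
move=> lin; have [act _] := lin.
have k0 : (0 < k)%N by apply: leq_trans hk.
pose a : letter k := (Ordinal k0, true); pose b : letter k := (Ordinal hk, true).
have ab : a != b by []; have ba : b != a by [].
case: (classic (forall u, tail_bounded Phi a u /\ tail_bounded Phi b u)) => [tails | ].
- (* case (A): every word extends by a or by b, so every orbit is bounded *)
  apply: bounded_orbits_no_shadowing => // u.
  have [[Ka Ka_ok] [Kb Kb_ok]] := tails u.
  exists (Rmax Ka Kb) => g i; rewrite act_fg_word //.
  case/orP: (reduced_extension ab (fg_red g)) => [/Ka_ok | /Kb_ok] bnd.
  + exact: Rle_trans (bnd i) (Rmax_l _ _).
  + exact: Rle_trans (bnd i) (Rmax_r _ _).
-
  move=> /not_all_ex_not [u /not_and_or [ua | ub]].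
  + exact: (unbounded_tail_no_shadowing lin ab _ ua).
  + exact: (unbounded_tail_no_shadowing lin ba _ ub).
Qed.
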